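(* Let $3\le k\le n$. The subgroup $VS_{k-1}^*$ of $VSPG_k$ is generated by the elements $\mu_{jk}$ for $1\le j\le k-1$ together with all reduced powers of the generators $\mu_{kj}$, $\gamma_{kj}$ and $\gamma_{jk}$ for $1\le j\le k-1$.
   Context: $VSPG_n$ is the group generated by $\{\mu_{ij},\gamma_{ij}\mid 1\le i\ne j\le n\}$ with defining relations (distinct letters denote distinct indices): $\mu_{ij}\mu_{ik}\mu_{jk}=\mu_{jk}\mu_{ik}\mu_{ij}$; $\mu_{ij}\mu_{ik}\gamma_{jk}=\gamma_{jk}\mu_{ik}\mu_{ij}$; $\gamma_{ij}\mu_{ik}\mu_{jk}=\mu_{jk}\mu_{ik}\gamma_{ij}$; $\mu_{ij}\gamma_{ji}=\gamma_{ij}\mu_{ji}$; $\mu_{ij}\mu_{kl}=\mu_{kl}\mu_{ij}$, $\gamma_{ij}\gamma_{kl}=\gamma_{kl}\gamma_{ij}$, $\mu_{ij}\gamma_{kl}=\gamma_{kl}\mu_{ij}$. For $k<n$, $VSPG_k$ is identified with the subgroup of $VSPG_n$ generated by $\mu_{ij},\gamma_{ij}$ with $i,j\le k$. For $2\le i\le n$, $VS_{i-1}$ is the subgroup generated by $\mu_{1i},\dots,\mu_{i-1,i},\mu_{i1},\dots,\mu_{i,i-1},\gamma_{1i},\dots,\gamma_{i-1,i},\gamma_{i1},\dots,\gamma_{i,i-1}$, and $VS_{i-1}^*$ is the normal closure of $VS_{i-1}$ in $VSPG_i$. Notation $a^b:=b^{-1}ab$. Reduced power of $\mu_{kj}$ ($1\le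 j\le k-1$): $\mu_{kj}^{w}$ where $w$ is the empty word or a reduced word (no adjacent mutually inverse letters) in $VSPG_{k-1}$ beginning with a nonzero power of some $\mu_{ij}$ or $\gamma_{ij}$ with $1\le i\le k-1$, $i\ne j$. Reduced powers of $\gamma_{kj},\gamma_{jk}$: $\gamma_{kj}^{w}$, $\gamma_{jk}^{w}$ where $w$ is the empty word or a reduced word in $VSPG_{k-1}$ beginning with a nonzero power of some $\gamma_{ij}$ or $\gamma_{ji}$ with $1\le i\le k-1$, $i\ne j$. *)

(* The group VSPG_m is given by generators and
   relations; we model it honestly as words in the generators and their
   inverses, modulo the congruence generated by free cancellation and the
   defining relations.  Subsets of VSPG_m are predicates on words. *)
From Stdlib Require Import List.
From mathcomp Require Import all_boot.
Set Implicit Arguments. Unset Strict Implicit. Unset Printing Implicit Defensive.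

(* generators mu_{ij} and gamma_{ij} (indices are 1-based) *)
Inductive gen : Type := Mu of nat & nat | Ga of nat & nat.

(* a letter: (true, g) stands for g^{-1}, (false, g) for g *)
Definition letter := (bool * gen)%type.
Definition word := seq letter.

Definition linv (x : letter) : letter := (~~ x.1, x.2).
Definition winv (w : word) : word := rev (map linv w).
Definition gw (g : gen) : word := [:: (false, g)].
(* conjugation x^w = w^{-1} x w *)
Definition conjw (x w : word) : word := winv w ++ x ++ w.

Definition idx_ok (m i : nat) : Prop := 1 <= i /\ i <= m.

Definition valid_gen (m : nat) (g : gen) : Prop :=
  match g with
  | Mu i j | Ga i j => idx_ok m i /\ idx_ok m j /\ i <> j
  end.

Definition valid_word (m : nat) (w : word) : Prop :=
  forall x, List.In x w -> valid_gen m x.2.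

Definition vspg_rel (m : nat) (l r : word) : Prop :=
  (exists i j k, idx_ok m i /\ idx_ok m j /\ idx_ok m k /\
     i <> j /\ i <> k /\ j <> k /\
     ((l = [:: (false, Mu i j); (false, Mu i k); (false, Mu j k)] /\
       r = [:: (false, Mu j k); (false, Mu i k); (false, Mu i j)]) \/
      (l = [:: (false, Mu i j); (false, Mu i k); (false, Ga j k)] /\
       r = [:: (false, Ga j k); (false, Mu i k); (false, Mu i j)]) \/
      (l = [:: (false, Ga i j); (false, Mu i k); (false, Mu j k)] /\
       r = [:: (false, Mu j k); (false, Mu i k); (false, Ga i j)])))
  \/ (exists i j, idx_ok m i /\ idx_ok m j /\ i <> j /\
       l = [:: (false, Mu i j); (false, Ga j i)] /\
       r = [:: (false, Ga i j); (false, Mu j i)])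
  \/ (exists i j k l0, idx_ok m i /\ idx_ok m j /\ idx_ok m k /\ idx_ok m l0 /\
       i <> j /\ i <> k /\ i <> l0 /\ j <> k /\ j <> l0 /\ k <> l0 /\
       ((l = [:: (false, Mu i j); (false, Mu k l0)] /\
         r = [:: (false, Mu k l0); (false, Mu i j)]) \/
        (l = [:: (false, Ga i j); (false, Ga k l0)] /\
         r = [:: (false, Ga k l0); (false, Ga i j)]) \/
        (l = [:: (false, Mu i j); (false, Ga k l0)] /\
         r = [:: (false, Ga k l0); (false, Mu i j)]))).

Inductive veq (m : nat) : word -> word -> Prop :=
  | veq_refl w : veq m w w
  | veq_sym u v : veq m u v -> veq m v u
  | veq_trans u v w : veq m u v -> veq m v w -> veq m u w
  | veq_cancel u v x : veq m (u ++ x :: linv x :: v) (u ++ v)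
  | veq_rel u v l r : vspg_rel m l r -> veq m (u ++ l ++ v) (u ++ r ++ v).

Definition gen_sub (m : nat) (S : word -> Prop) (w : word) : Prop :=
  exists s : seq (bool * word),
    (forall p, List.In p s -> valid_word m p.2 /\ S p.2) /\
    veq m w (flatten (map (fun p => if p.1 then winv p.2 else p.2) s)).

Definition normal_closure (m : nat) (H : word -> Prop) : word -> Prop :=
  gen_sub m (fun x => exists h g, H h /\ valid_word m h /\ valid_word m g /\
                                  x = conjw h g).

(* VS_{k-1} in VSPG_k, and VS_{k-1}^* *)
Definition VS_gens (k : nat) (x : word) : Prop :=
  exists j, 1 <= j <= k - 1 /\
    (x = gw (Mu j k) \/ x = gw (Mu k j) \/ x = gw (Ga j k) \/ x = gw (Ga k j)).
Definition VS (k : nat) : word -> Prop := gen_sub k (VS_gens k).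
Definition VS_star (k : nat) : word -> Prop := normal_closure k (VS k).

Fixpoint reduced (w : word) : Prop :=
  match w with
  | x :: ((y :: _) as t) => ~ (x.2 = y.2 /\ x.1 = ~~ y.1) /\ reduced t
  | _ => True
  end.

(* admissible exponent words for reduced powers of mu_{kj} *)
Definition mu_exp_word (k j : nat) (w : word) : Prop :=
  w = [::] \/
  (valid_word (k - 1) w /\ reduced w /\
   exists x t i, w = x :: t /\ 1 <= i <= k - 1 /\ i <> j /\
                 (x.2 = Mu i j \/ x.2 = Ga i j)).

(* admissible exponent words for reduced powers of gamma_{kj}, gamma_{jk} *)
Definition ga_exp_word (k j : nat) (w : word) : Prop :=
  w = [::] \/
  (valid_word (k - 1) w /\ reduced w /\
   exists x t i, w = x :: t /\ 1 <= i <= k - 1 /\ i <> j /\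
                 (x.2 = Ga i j \/ x.2 = Ga j i)).

Definition thm_gens (k : nat) (x : word) : Prop :=
  exists j, 1 <= j <= k - 1 /\
   (x = gw (Mu j k) \/
    (exists w, mu_exp_word k j w /\ x = conjw (gw (Mu k j)) w) \/
    (exists w, ga_exp_word k j w /\ x = conjw (gw (Ga k j)) w) \/
    (exists w, ga_exp_word k j w /\ x = conjw (gw (Ga j k)) w)).

From Stdlib Require Import List.
From mathcomp Require Import all_boot zify.
Set Implicit Arguments. Unset Strict Implicit. Unset Printing Implicit Defensive.

(* Let H be the subgroup generated by the listed elements.  They are conjugates of
   generators of VS_{k-1}, so H lies in VS_{k-1}^*; conversely H contains VS_{k-1}
   (take empty exponents, and mu_jk = gamma_jk mu_kj gamma_kj^-1), so it suffices to
   show that H is normal.  Conjugating by a generator that carries the index k is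
   conjugating by an element of H.  For a word w of VSPG_{k-1} one shows, by induction
   on its length, that mu_kj^w, gamma_kj^w and gamma_jk^w lie in H for all j: a free
   cancellation shortens w; if w = y w' is reduced and y has the shape required of a
   reduced power, the conjugate is a generator of H; otherwise a defining relation
   (a commutation or a three-term relation) writes X^y as a product of generators
   with index k and of conjugates by y of the shape required, or already treated,
   and conjugating by w' concludes by induction. *)

Definition pos (g : gen) : letter := (false, g).
Definition neg (g : gen) : letter := (true, g).

Lemma linvK : involutive linv.
Proof. by case=> [[] g]. Qed.

Lemma winv_cat a b : winv (a ++ b) = winv b ++ winv a.
Proof. by rewrite /winv map_cat rev_cat. Qed.

Lemma winv_cons x a : winv (x :: a) = winv a ++ [:: linv x].
Proof. by rewrite /winv /= rev_cons cats1. Qed.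

Lemma winvK : involutive winv.
Proof. by elim=> // x a IH; rewrite winv_cons winv_cat IH /= linvK. Qed.

Lemma conjw_nil X : conjw X [::] = X.
Proof. by rewrite /conjw /= cats0. Qed.

Lemma conjw_cat X u v : conjw (conjw X u) v = conjw X (u ++ v).
Proof. by rewrite /conjw winv_cat -!catA. Qed.

Lemma rev_List (T : Type) (s : seq T) : rev s = List.rev s.
Proof. by elim: s => //= x s IH; rewrite rev_cons -cats1 IH. Qed.

Lemma In_winv x w : List.In x (winv w) -> List.In (linv x) w.
Proof.
rewrite /winv rev_List -List.in_rev => /List.in_map_iff [y [<- Hy]].
by rewrite linvK.
Qed.

Section Validity.
Variable m : nat.

Lemma valid_cat a b : valid_word m a -> valid_word m b -> valid_word m (a ++ b).
Proof. by move=> Va Vb x /List.in_app_iff [/Va|/Vb]. Qed.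

Lemma valid_winv a : valid_word m a -> valid_word m (winv a).
Proof. by move=> Va x /In_winv /Va. Qed.

Lemma valid_conj X w : valid_word m X -> valid_word m w -> valid_word m (conjw X w).
Proof. by move=> VX Vw; apply: valid_cat (valid_winv Vw) (valid_cat VX Vw). Qed.

Lemma valid_tail y w : valid_word m (y :: w) -> valid_word m w.
Proof. by move=> V x Hx; apply: V; right. Qed.

Lemma valid_cancel u x v :
  valid_word m (u ++ x :: linv x :: v) -> valid_word m (u ++ v).
Proof.
move=> V z /List.in_app_iff Hz; apply: V; apply/List.in_app_iff.
by case: Hz; [left | right; right; right].
Qed.

Lemma valid_gen1 g : valid_gen m g -> valid_word m (gw g).
Proof. by move=> Vg x [<-|]. Qed.

End Validity.

Lemma valid_word_widen m w : valid_word (m - 1) w -> valid_word m w.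
Proof. by move=> V x /V; case: x.2 => i j /=; rewrite /idx_ok; lia. Qed.

Lemma letter_eq_dec (x y : letter) : {x = y} + {x <> y}.
Proof. by do !decide equality. Qed.

Lemma reduced_or_cancel w : reduced w \/ exists u x v, w = u ++ x :: linv x :: v.
Proof.
elim: w => [|x [|y t] IH]; [by left | by left |].
case: (letter_eq_dec y (linv x)) => [->|neq].
  by right; exists [::], x, t.
case: IH => [Rt|[u [z [v ->]]]]; last by right; exists (x :: u), z, v.
left; split => //; case: x y {Rt} neq => [b g] [c h] neq /= [eg eb].
by apply: neq; rewrite eg eb /linv /= negbK.
Qed.

Section Congruence.
Variable m : nat.

Lemma veq_cong a b u v : veq m u v -> veq m (a ++ u ++ b) (a ++ v ++ b).
Proof.
elim=> {u v} [w|u v _|u v w _ IH1 _|u v x|u v l r Hlr].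
- exact: veq_refl.
- exact: veq_sym.
- exact: veq_trans.
- have := veq_cancel m (a ++ u) (v ++ b) x.
  by rewrite -!catA.
- have := veq_rel (a ++ u) (v ++ b) Hlr.
  by rewrite -!catA.
Qed.

Lemma veq_of_rel l r : vspg_rel m l r -> veq m l r.
Proof. by move=> Hlr; have := veq_rel [::] [::] Hlr; rewrite /= !cats0. Qed.

Lemma veq_mulwV w : veq m (w ++ winv w) [::].
Proof.
elim: w => [|x w IH] /=; first exact: veq_refl.
rewrite winv_cons; apply: (veq_trans (v := [:: x; linv x])).
  by have := veq_cong [:: x] [:: linv x] IH; rewrite /= -catA.
exact: (veq_cancel m [::] [::] x).
Qed.

Lemma veq_mulVw w : veq m (winv w ++ w) [::].
Proof. by have := veq_mulwV (winv w); rewrite winvK. Qed.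

Lemma veq_winv u v : veq m u v -> veq m (winv u) (winv v).
Proof.
elim=> {u v} [w|u v _|u v w _ IH1 _|u v x|u v l r Hlr].
- exact: veq_refl.
- exact: veq_sym.
- exact: veq_trans.
- by rewrite !winv_cat !winv_cons linvK -!catA; apply: veq_cancel.
- have Vlr : veq m (winv l) (winv r).
    apply: (veq_trans (v := winv l ++ r ++ winv r)).
      by have := veq_cong (winv l) [::] (veq_sym (veq_mulwV r)); rewrite !cats0.
    apply: (veq_trans (v := winv l ++ l ++ winv r)).
      by have := veq_cong (winv l) (winv r) (veq_sym (veq_of_rel Hlr)).
    by have := veq_cong [::] (winv r) (veq_mulVw l); rewrite /= -catA.
  by rewrite !winv_cat -!catA; apply: veq_cong.
Qed.

End Congruence.

Section ConjugationIdentities.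
Variables (m : nat) (T U y : gen).

Lemma veq_conj_of_rel_last :
  veq m [:: pos T; pos U; pos y] [:: pos y; pos U; pos T] ->
  veq m [:: neg y; pos T; pos y] [:: pos U; pos T; neg y; neg U; pos y] /\
  veq m [:: pos y; pos T; neg y] [:: pos y; neg U; neg y; pos T; pos U].
Proof.
move=> H; split.
- apply: veq_trans (veq_sym (veq_cancel m [:: neg y; pos T] [:: pos y] (pos U))) _.
  apply: veq_trans (veq_sym (veq_cancel m [:: neg y; pos T; pos U] [:: neg U; pos y] (pos y))) _.
  apply: veq_trans (veq_cong [:: neg y] [:: neg y; neg U; pos y] H) _.
  exact: (veq_cancel m [::] [:: pos U; pos T; neg y; neg U; pos y] (neg y)).
- apply: veq_trans (veq_sym (veq_cancel m [:: pos y] [:: pos T; neg y] (neg U))) _.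
  apply: veq_trans (veq_sym (veq_cancel m [:: pos y; neg U] [:: pos U; pos T; neg y] (neg y))) _.
  apply: veq_trans (veq_cong [:: pos y; neg U; neg y] [:: neg y] (veq_sym H)) _.
  exact: (veq_cancel m [:: pos y; neg U; neg y; pos T; pos U] [::] (pos y)).
Qed.

Lemma veq_conj_of_rel_mid :
  veq m [:: pos T; pos y; pos U] [:: pos U; pos y; pos T] ->
  veq m [:: neg y; pos T; pos y] [:: neg y; pos U; pos y; pos T; neg U] /\
  veq m [:: pos y; pos T; neg y] [:: neg U; pos T; pos y; pos U; neg y].
Proof.
move=> H; split.
- apply: veq_trans (veq_sym (veq_cancel m [:: neg y; pos T; pos y] [::] (pos U))) _.
  exact: (veq_cong [:: neg y] [:: neg U] H).
- apply: veq_trans (veq_sym (veq_cancel m [::] [:: pos y; pos T; neg y] (neg U))) _.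
  exact: (veq_cong [:: neg U] [:: neg y] (veq_sym H)).
Qed.

Lemma veq_conj_of_comm :
  veq m [:: pos T; pos y] [:: pos y; pos T] ->
  veq m [:: neg y; pos T; pos y] [:: pos T] /\ veq m [:: pos y; pos T; neg y] [:: pos T].
Proof.
move=> H; split.
- apply: veq_trans (veq_cong [:: neg y] [::] H) _.
  exact: (veq_cancel m [::] [:: pos T] (neg y)).
- apply: veq_trans (veq_cong [::] [:: neg y] (veq_sym H)) _.
  exact: (veq_cancel m [:: pos T] [::] (pos y)).
Qed.

End ConjugationIdentities.

Definition gen_prod (s : seq (bool * word)) : word :=
  flatten (map (fun p : bool * word => if p.1 then winv p.2 else p.2) s).

Definition flip_sign (p : bool * word) : bool * word := (~~ p.1, p.2).

Lemma gen_prod_cat s t : gen_prod (s ++ t) = gen_prod s ++ gen_prod t.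
Proof. by rewrite /gen_prod map_cat flatten_cat. Qed.

Lemma gen_prod_inv s : gen_prod (map flip_sign (rev s)) = winv (gen_prod s).
Proof.
elim: s => [|p s IH] //=.
rewrite rev_cons -cats1 map_cat gen_prod_cat IH /= winv_cat /gen_prod /= cats0.
by case: p.1; rewrite ?winvK.
Qed.

Section GeneratedSubgroup.
Variables (m : nat) (S : word -> Prop).
Local Notation H := (gen_sub m S).

Lemma gen_sub_veq u v : veq m u v -> H u -> H v.
Proof. by move=> Huv [s [Ss Hu]]; exists s; split; last exact: veq_trans (veq_sym Huv) Hu. Qed.

Lemma gen_sub_nil : H [::].
Proof. by exists [::]; split; last exact: veq_refl. Qed.

Lemma gen_sub_mem x : S x -> valid_word m x -> H x.
Proof.
move=> Sx Vx; exists [:: (false, x)]; split; first by move=> p [<-|].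
by rewrite /= cats0; apply: veq_refl.
Qed.

Lemma gen_sub_cat u v : H u -> H v -> H (u ++ v).
Proof.
move=> [s [Ss Hu]] [t [St Hv]]; exists (s ++ t); split.
  by move=> p /List.in_app_iff [/Ss|/St].
rewrite -/(gen_prod _) gen_prod_cat.
apply: (veq_trans (v := gen_prod s ++ v)).
  by have := veq_cong [::] v Hu.
by have := veq_cong (gen_prod s) [::] Hv; rewrite !cats0.
Qed.

Lemma gen_sub_winv u : H u -> H (winv u).
Proof.
move=> [s [Ss Hu]]; exists (map flip_sign (rev s)); split.
  move=> p /List.in_map_iff [q [<-]].
  by rewrite rev_List -List.in_rev => /Ss.
by rewrite -/(gen_prod _) gen_prod_inv; apply: veq_winv.
Qed.

Lemma gen_sub_conj u v : H u -> H v -> H (conjw u v).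
Proof. by move=> Hu Hv; apply: gen_sub_cat (gen_sub_winv Hv) (gen_sub_cat Hu Hv). Qed.

End GeneratedSubgroup.

Definition conj_in (m : nat) (S : word -> Prop) (w X : word) : Prop :=
  gen_sub m S (conjw X w).

Section ConjugateInSubgroup.
Variables (m : nat) (S : word -> Prop) (w : word).
Local Notation C := (conj_in m S w).

Lemma conj_in_veq X Y : veq m X Y -> C X -> C Y.
Proof. by move=> HXY; apply: gen_sub_veq; apply: veq_cong. Qed.

Lemma conj_in_nil : C [::].
Proof. exact: gen_sub_veq (veq_sym (veq_mulVw _ _)) (gen_sub_nil _ _). Qed.

Lemma conj_in_cat X Y : C X -> C Y -> C (X ++ Y).
Proof.
move=> HX HY; apply: gen_sub_veq (gen_sub_cat HX HY).
have := veq_cong (winv w ++ X) (Y ++ w) (veq_mulwV m w).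
by rewrite /conjw -!catA.
Qed.

Lemma conj_in_winv X : C X -> C (winv X).
Proof. by move/gen_sub_winv; rewrite /conj_in /conjw !winv_cat winvK -!catA. Qed.

Lemma conj_in_gen_sub S' X :
  (forall t, S' t -> valid_word m t -> C t) -> gen_sub m S' X -> C X.
Proof.
move=> HS' [s [Ss HX]]; apply: conj_in_veq (veq_sym HX) _.
elim: s Ss {HX} => [|p s IH] Ss /=; first exact: conj_in_nil.
apply: conj_in_cat; last by apply: IH => q Hq; apply: Ss; right.
have [Vp S'p] := Ss p (or_introl erefl).
by have := HS' _ S'p Vp; case: p.1 => //; apply: conj_in_winv.
Qed.

End ConjugateInSubgroup.

Lemma gen_sub_min m S S' X :
  (forall t, S' t -> valid_word m t -> gen_sub m S t) -> gen_sub m S' X -> gen_sub m S X.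
Proof.
move=> HS'; have := @conj_in_gen_sub m S [::] S' X.
by rewrite /conj_in !conjw_nil; apply => t St Vt; rewrite conjw_nil; apply: HS'.
Qed.

Lemma conj_in_cons m S x w X : conj_in m S (x :: w) X = conj_in m S w (conjw X [:: x]).
Proof. by rewrite /conj_in conjw_cat. Qed.

Lemma conj_in_cancel m S u x v X :
  conj_in m S (u ++ v) X -> conj_in m S (u ++ x :: linv x :: v) X.
Proof.
apply: gen_sub_veq; rewrite /conjw !winv_cat !winv_cons linvK -!catA /=.
apply: veq_sym; apply: veq_trans (veq_cancel _ _ _ _) _.
have := veq_cancel m (winv v ++ winv u ++ X ++ u) v x.
by rewrite -!catA.
Qed.

Section DefiningRelations.
Variable m : nat.

Lemma rel_mu_mu_mu i j l : idx_ok m i -> idx_ok m j -> idx_ok m l ->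
  i <> j -> i <> l -> j <> l ->
  veq m [:: pos (Mu i j); pos (Mu i l); pos (Mu j l)]
        [:: pos (Mu j l); pos (Mu i l); pos (Mu i j)].
Proof. by move=> *; apply: veq_of_rel; left; exists i, j, l; do 6 (split; first by []); left. Qed.

Lemma rel_mu_mu_ga i j l : idx_ok m i -> idx_ok m j -> idx_ok m l ->
  i <> j -> i <> l -> j <> l ->
  veq m [:: pos (Mu i j); pos (Mu i l); pos (Ga j l)]
        [:: pos (Ga j l); pos (Mu i l); pos (Mu i j)].
Proof.
by move=> *; apply: veq_of_rel; left; exists i, j, l; do 6 (split; first by []); right; left.
Qed.

Lemma rel_ga_mu_mu i j l : idx_ok m i -> idx_ok m j -> idx_ok m l ->
  i <> j -> i <> l -> j <> l ->
  veq m [:: pos (Ga i j); pos (Mu i l); pos (Mu j l)]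
        [:: pos (Mu j l); pos (Mu i l); pos (Ga i j)].
Proof.
by move=> *; apply: veq_of_rel; left; exists i, j, l; do 6 (split; first by []); right; right.
Qed.

Lemma rel_mu_ga i j : idx_ok m i -> idx_ok m j -> i <> j ->
  veq m [:: pos (Mu i j); pos (Ga j i)] [:: pos (Ga i j); pos (Mu j i)].
Proof. by move=> *; apply: veq_of_rel; right; left; exists i, j; do 3 (split; first by []). Qed.

Section Commutation.
Variables (i j a b : nat).
Hypotheses (hi : idx_ok m i) (hj : idx_ok m j) (ha : idx_ok m a) (hb : idx_ok m b).
Hypotheses (hij : i <> j) (hia : i <> a) (hib : i <> b) (hja : j <> a) (hjb : j <> b)
           (hab : a <> b).

Lemma comm_mu_mu : veq m [:: pos (Mu i j); pos (Mu a b)] [:: pos (Mu a b); pos (Mu i j)].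
Proof. by apply: veq_of_rel; right; right; exists i, j, a, b; do 10 (split; first by []); left. Qed.

Lemma comm_ga_ga : veq m [:: pos (Ga i j); pos (Ga a b)] [:: pos (Ga a b); pos (Ga i j)].
Proof.
by apply: veq_of_rel; right; right; exists i, j, a, b; do 10 (split; first by []); right; left.
Qed.

Lemma comm_mu_ga : veq m [:: pos (Mu i j); pos (Ga a b)] [:: pos (Ga a b); pos (Mu i j)].
Proof.
by apply: veq_of_rel; right; right; exists i, j, a, b; do 10 (split; first by []); right; right.
Qed.

End Commutation.
End DefiningRelations.

Section ConjugationStep.
Variables (m : nat) (S : word -> Prop) (T U y : gen) (s : bool) (w : word).
Local Notation C := (conj_in m S).

Lemma conj_in_cons_of_rel_last :
  veq m [:: pos T; pos U; pos y] [:: pos y; pos U; pos T] ->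
  C w [:: pos U] -> C w [:: pos T] -> C ((s, y) :: w) [:: pos U] ->
  C ((s, y) :: w) [:: pos T].
Proof.
move=> /veq_conj_of_rel_last [Hpos Hneg] HU HT.
rewrite !conj_in_cons => /conj_in_winv HyU.
case: s HyU => HyU.
- apply: conj_in_veq (veq_sym Hneg) _.
  by apply: (conj_in_cat (X := [:: pos y; neg U; neg y])) HyU (conj_in_cat HT HU).
- apply: conj_in_veq (veq_sym Hpos) _.
  by apply: (conj_in_cat (X := [:: pos U; pos T])) (conj_in_cat HU HT) HyU.
Qed.

Lemma conj_in_cons_of_rel_mid :
  veq m [:: pos T; pos y; pos U] [:: pos U; pos y; pos T] ->
  C w [:: pos U] -> C w [:: pos T] -> C ((s, y) :: w) [:: pos U] ->
  C ((s, y) :: w) [:: pos T].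
Proof.
move=> /veq_conj_of_rel_mid [Hpos Hneg] /conj_in_winv HU HT.
rewrite !conj_in_cons; case: s => HyU.
- apply: conj_in_veq (veq_sym Hneg) _.
  by apply: (conj_in_cat (X := [:: neg U; pos T])) (conj_in_cat HU HT) HyU.
- apply: conj_in_veq (veq_sym Hpos) _.
  by apply: (conj_in_cat (X := [:: neg y; pos U; pos y])) HyU (conj_in_cat HT HU).
Qed.

Lemma conj_in_cons_of_comm :
  veq m [:: pos T; pos y] [:: pos y; pos T] ->
  C w [:: pos T] -> C ((s, y) :: w) [:: pos T].
Proof.
move=> /veq_conj_of_comm [Hpos Hneg] HT; rewrite conj_in_cons.
by case: s; [apply: conj_in_veq (veq_sym Hneg) _ | apply: conj_in_veq (veq_sym Hpos) _].
Qed.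

End ConjugationStep.

Lemma conj_in_mu_of_ga m S w i j : idx_ok m i -> idx_ok m j -> i <> j ->
  conj_in m S w [:: pos (Ga i j)] -> conj_in m S w [:: pos (Mu j i)] ->
  conj_in m S w [:: pos (Ga j i)] -> conj_in m S w [:: pos (Mu i j)].
Proof.
move=> hi hj hij Hgij Hmji /conj_in_winv Hgji.
apply: conj_in_veq (conj_in_cat (conj_in_cat Hgij Hmji) Hgji).
apply: veq_sym; apply: veq_trans (veq_sym (veq_cancel m [:: pos (Mu i j)] [::] (pos (Ga j i)))) _.
exact: (veq_cong [::] [:: neg (Ga j i)] (rel_mu_ga hi hj hij)).
Qed.

Lemma valid_gen_split k g :
  valid_gen k g -> valid_gen (k - 1) g \/ VS_gens k (gw g).
Proof.
case: g => a b /= [ha [hb hab]]; move: ha hb; rewrite /idx_ok => ha hb.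
- have [eak|hak] := PeanoNat.Nat.eq_dec a k.
    by right; exists b; rewrite eak; split; [lia | right; left].
  have [ebk|hbk] := PeanoNat.Nat.eq_dec b k.
    by right; exists a; rewrite ebk; split; [lia | left].
  by left; lia.
- have [eak|hak] := PeanoNat.Nat.eq_dec a k.
    by right; exists b; rewrite eak; split; [lia | right; right; right].
  have [ebk|hbk] := PeanoNat.Nat.eq_dec b k.
    by right; exists a; rewrite ebk; split; [lia | right; right; left].
  by left; lia.
Qed.

Lemma VS_gens_valid k x : VS_gens k x -> valid_word k x.
Proof.
by move=> [j [hj Hx]]; case: Hx => [|[|[|]]] ->; apply: valid_gen1 => /=; rewrite /idx_ok; lia.
Qed.

Lemma mu_exp_word_valid k j w : mu_exp_word k j w -> valid_word (k - 1) w.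
Proof. by case=> [->|[]]. Qed.

Lemma ga_exp_word_valid k j w : ga_exp_word k j w -> valid_word (k - 1) w.
Proof. by case=> [->|[]]. Qed.

Lemma thm_gens_conj_VS_gens k x : thm_gens k x ->
  exists X w, [/\ VS_gens k X, valid_word (k - 1) w & x = conjw X w].
Proof.
move=> [j [hj Hx]].
case: Hx => [->|[[w [ew ->]]|[[w [ew ->]]|[w [ew ->]]]]].
- by exists (gw (Mu j k)), [::]; rewrite conjw_nil; split => //; exists j; split => //; left.
- exists (gw (Mu k j)), w; split; last by [].
    by exists j; split => //; right; left.
  exact: mu_exp_word_valid ew.
- exists (gw (Ga k j)), w; split; last by [].
    by exists j; split => //; right; right; right.
  exact: ga_exp_word_valid ew.
- exists (gw (Ga j k)), w; split; last by [].
    by exists j; split => //; right; right; left.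
  exact: ga_exp_word_valid ew.
Qed.

Lemma VS_gens_in_thm_sub k x : VS_gens k x -> gen_sub k (thm_gens k) x.
Proof.
move=> Gx; apply: gen_sub_mem (VS_gens_valid Gx).
move: Gx => [j [hj Hx]]; exists j; split => //.
case: Hx => [->|[|[|]] ->]; first by left.
- by right; left; exists [::]; rewrite conjw_nil; split => //; left.
- by right; right; right; exists [::]; rewrite conjw_nil; split => //; left.
- by right; right; left; exists [::]; rewrite conjw_nil; split => //; left.
Qed.

Section Normality.
Variable k : nat.
Local Notation C := (conj_in k (thm_gens k)).
Local Ltac ix := rewrite /idx_ok; lia.

Definition kgens_conj_in (w : word) : Prop :=
  forall j, 1 <= j <= k - 1 ->
    C w [:: pos (Mu k j)] /\ C w [:: pos (Ga k j)] /\ C w [:: pos (Ga j k)].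

Lemma mu_jk_conj_in w j : kgens_conj_in w -> 1 <= j <= k - 1 -> C w [:: pos (Mu j k)].
Proof. by move=> Hw hj; have [? [? ?]] := Hw j hj; apply: conj_in_mu_of_ga => //; ix. Qed.

Lemma reduced_power_mu_in y w i j :
  valid_word (k - 1) (y :: w) -> reduced (y :: w) ->
  1 <= i <= k - 1 -> 1 <= j <= k - 1 -> i <> j -> (y.2 = Mu i j \/ y.2 = Ga i j) ->
  C (y :: w) [:: pos (Mu k j)].
Proof.
move=> V R hi hj hij hy; apply: gen_sub_mem.
  exists j; split => //; right; left; exists (y :: w); split => //.
  by right; split => //; split => //; exists y, w, i; do 3 (split => //).
apply: valid_conj (valid_word_widen V); apply: valid_gen1 => /=; split; [|split]; ix.
Qed.

Lemma reduced_power_ga_in y w i j :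
  valid_word (k - 1) (y :: w) -> reduced (y :: w) ->
  1 <= i <= k - 1 -> 1 <= j <= k - 1 -> i <> j -> (y.2 = Ga i j \/ y.2 = Ga j i) ->
  C (y :: w) [:: pos (Ga k j)] /\ C (y :: w) [:: pos (Ga j k)].
Proof.
move=> V R hi hj hij hy.
have Ew : ga_exp_word k j (y :: w).
  by right; split => //; split => //; exists y, w, i; do 3 (split => //).
split; apply: gen_sub_mem.
- by exists j; split => //; right; right; left; exists (y :: w).
- apply: valid_conj (valid_word_widen V); apply: valid_gen1 => /=; split; [|split]; ix.
- by exists j; split => //; right; right; right; exists (y :: w).
- apply: valid_conj (valid_word_widen V); apply: valid_gen1 => /=; split; [|split]; ix.
Qed.

Lemma kgens_conj_in_nil : kgens_conj_in [::].
Proof.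
move=> j hj; rewrite /conj_in !conjw_nil.
by split; [|split]; apply: VS_gens_in_thm_sub; exists j; split => //;
  right; [left | right; right | right; left].
Qed.

Section ConsLetter.
Variables (s : bool) (a b : nat) (w : word).
Hypotheses (Hw : kgens_conj_in w) (ha : 1 <= a <= k - 1) (hb : 1 <= b <= k - 1) (hab : a <> b).

Lemma kgens_conj_in_cons_mu_source :
  valid_word (k - 1) ((s, Mu a b) :: w) -> reduced ((s, Mu a b) :: w) ->
  C ((s, Mu a b) :: w) [:: pos (Mu k a)] /\ C ((s, Mu a b) :: w) [:: pos (Ga k a)] /\
  C ((s, Mu a b) :: w) [:: pos (Ga a k)].
Proof.
move=> V R; have [Ia1 [Ia2 Ia3]] := Hw ha; have [Ib1 _] := Hw hb.
have D := reduced_power_mu_in V R ha hb hab (or_introl erefl).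
split; [|split].
- by apply: (conj_in_cons_of_rel_last (@rel_mu_mu_mu k k a b _ _ _ _ _ _)) Ib1 Ia1 D; ix.
- by apply: (conj_in_cons_of_rel_last (@rel_ga_mu_mu k k a b _ _ _ _ _ _)) Ib1 Ia2 D; ix.
- by apply: (conj_in_cons_of_rel_mid (@rel_ga_mu_mu k a k b _ _ _ _ _ _)) Ib1 Ia3 D; ix.
Qed.

Lemma kgens_conj_in_cons_mu :
  valid_word (k - 1) ((s, Mu a b) :: w) -> reduced ((s, Mu a b) :: w) ->
  kgens_conj_in ((s, Mu a b) :: w).
Proof.
move=> V R j hj; have [Ij1 [Ij2 Ij3]] := Hw hj.
have [Sa1 [Sa2 Sa3]] := kgens_conj_in_cons_mu_source V R.
have [hja|hja] := PeanoNat.Nat.eq_dec j a; first by rewrite hja.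
have [->|hjb] := PeanoNat.Nat.eq_dec j b.
- have [_ [Ib2 Ib3]] := Hw hb; have Ma := mu_jk_conj_in Hw ha.
  have Mya : C ((s, Mu a b) :: w) [:: pos (Mu a k)].
    by apply: conj_in_mu_of_ga Sa3 Sa1 Sa2; ix.
  split; [|split].
  + exact: reduced_power_mu_in V R ha hb hab (or_introl erefl).
  + by apply: (conj_in_cons_of_rel_mid (veq_sym (@rel_mu_mu_ga k a k b _ _ _ _ _ _)))
      Ma Ib2 Mya; ix.
  + by apply: (conj_in_cons_of_rel_last (veq_sym (@rel_mu_mu_ga k a b k _ _ _ _ _ _)))
      Ma Ib3 Mya; ix.
- split; [|split]; apply: conj_in_cons_of_comm => //.
  + by apply: (@comm_mu_mu k k j a b); ix.
  + by apply/veq_sym/(@comm_mu_ga k a b k j); ix.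
  + by apply/veq_sym/(@comm_mu_ga k a b j k); ix.
Qed.

Lemma kgens_conj_in_cons_ga :
  valid_word (k - 1) ((s, Ga a b) :: w) -> reduced ((s, Ga a b) :: w) ->
  kgens_conj_in ((s, Ga a b) :: w).
Proof.
move=> V R j hj; have [Ij1 [Ij2 Ij3]] := Hw hj.
have [->|hjb] := PeanoNat.Nat.eq_dec j b.
  split; first exact: reduced_power_mu_in V R ha hb hab (or_intror erefl).
  exact: reduced_power_ga_in V R ha hb hab (or_introl erefl).
have [->|hja] := PeanoNat.Nat.eq_dec j a.
  have [Ia1 _] := Hw ha; have [Ib1 _] := Hw hb.
  split; last exact: reduced_power_ga_in V R hb ha (nesym hab) (or_intror erefl).
  have Myb := reduced_power_mu_in V R ha hb hab (or_intror erefl).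
  by apply: (conj_in_cons_of_rel_last (@rel_mu_mu_ga k k a b _ _ _ _ _ _)) Ib1 Ia1 Myb; ix.
split; [|split]; apply: conj_in_cons_of_comm => //.
- by apply: (@comm_mu_ga k k j a b); ix.
- by apply: (@comm_ga_ga k k j a b); ix.
- by apply: (@comm_ga_ga k j k a b); ix.
Qed.

End ConsLetter.

Lemma kgens_conj_in_valid w : valid_word (k - 1) w -> kgens_conj_in w.
Proof.
move: {2}(size w) (leqnn (size w)) => n; elim: n w => [|n IHn] w.
  by case: w => // _ _; apply: kgens_conj_in_nil.
case: (reduced_or_cancel w) => [|[u [x [v ->]]]].
- case: w => [|[s g] w] R hs V; first exact: kgens_conj_in_nil.
  have Hw : kgens_conj_in w by apply: IHn (valid_tail V).
  have : valid_gen (k - 1) g by apply: (V (s, g)); left.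
  case: g V R {hs} => a b V R /= [ha [hb hab]].
  + by apply: kgens_conj_in_cons_mu => //; move: ha hb; rewrite /idx_ok; lia.
  + by apply: kgens_conj_in_cons_ga => //; move: ha hb; rewrite /idx_ok; lia.
- move=> hs /valid_cancel V j hj.
  have Huv : kgens_conj_in (u ++ v) by apply: IHn V; move: hs; rewrite !size_cat /=; lia.
  by have [? [? ?]] := Huv j hj; split; [|split]; apply: conj_in_cancel.
Qed.

Lemma VS_gens_conj_in w X : kgens_conj_in w -> VS_gens k X -> C w X.
Proof.
move=> Hw [j [hj HX]]; have [Mkj [Gkj Gjk]] := Hw j hj.
by case: HX => [|[|[|]]] ->; first exact: mu_jk_conj_in.
Qed.

End Normality.

Section Main.
Variable k : nat.
Local Notation H := (gen_sub k (thm_gens k)).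

Lemma thm_sub_conj_letter y h : valid_gen k y.2 -> H h -> H (conjw h [:: y]).
Proof.
case: y => s g /= /valid_gen_split [Vg|/VS_gens_in_thm_sub Hg] Hh; last first.
  by apply: gen_sub_conj Hh _; case: s; [exact: gen_sub_winv Hg | exact: Hg].
have Vy : valid_word (k - 1) [:: (s, g)] by move=> x [<-|].
apply: conj_in_gen_sub Hh => _ /thm_gens_conj_VS_gens [X [w [GX Vw ->]]] _.
rewrite /conj_in conjw_cat.
exact: VS_gens_conj_in (kgens_conj_in_valid (valid_cat Vw Vy)) GX.
Qed.

Lemma thm_sub_conj g h : valid_word k g -> H h -> H (conjw h g).
Proof.
elim: g h => [|y g IH] h Vg Hh; first by rewrite conjw_nil.
rewrite -cat1s -conjw_cat; apply: IH (valid_tail Vg) _.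
by apply: thm_sub_conj_letter Hh; apply: Vg; left.
Qed.

Lemma thm_gens_in_VS_star x : thm_gens k x -> valid_word k x -> VS_star k x.
Proof.
move=> /thm_gens_conj_VS_gens [X [w [GX Vw ->]]] Vx; apply: gen_sub_mem Vx.
have VX := VS_gens_valid GX.
by exists X, w; do !split => //; [apply: gen_sub_mem | apply: valid_word_widen].
Qed.

End Main.

Theorem mainTheorem11 (n k : nat) (hk3 : 3 <= k) (hkn : k <= n) :
  forall w : word, valid_word k w ->
    (VS_star k w <-> gen_sub k (thm_gens k) w).
Proof.
move=> w _; split.
- apply: gen_sub_min => _ [h [g [VSh [_ [Vg ->]]]]] _.
  apply: thm_sub_conj Vg _; apply: gen_sub_min VSh => t Gt _.
  exact: VS_gens_in_thm_sub.
- apply: gen_sub_min => t Gt Vt; exact: thm_gens_in_VS_star.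
Qed.
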